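(* Let $m,n\geq 1$ be integers. Then \[ \sum_{k=1}^{n}{n\brack k}\frac{(q^m/z;q)_k(z;q)_{n-k}}{(zq^{-m};q)_{m+n}(1-q^k)^{m}}z^k =-\sum_{1\leq k_m\leq k_{m-1}\leq\cdots\leq k_1\leq n}\ \prod_{i=1}^{m}\frac{q^{k_i}}{(1-zq^{k_i-i})(1-q^{k_i})}. \]
   Context: For $N\geq 0$, $(x;q)_N=(1-x)(1-xq)\cdots(1-xq^{N-1})$ (with $(x;q)_0=1$). The $q$-binomial coefficient is ${n\brack k}=\frac{(q;q)_n}{(q;q)_k(q;q)_{n-k}}$ for $0\leq k\leq n$ and $0$ otherwise. The identity is one of rational functions in $q$ and $z$. *)

From HB Require Import structures.
From mathcomp Require Import all_boot all_order all_algebra.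
Set Implicit Arguments. Unset Strict Implicit. Unset Printing Implicit Defensive.
Import Order.TTheory GRing.Theory Num.Theory.
Local Open Scope ring_scope.

Definition qpoch (F : fieldType) (x q : F) (N : nat) : F :=
  \prod_(i < N) (1 - x * q ^+ i).

Definition qbinom (F : fieldType) (q : F) (n k : nat) : F :=
  if (k <= n)%N then qpoch q q n / (qpoch q q k * qpoch q q (n - k)) else 0.

From HB Require Import structures.
From mathcomp Require Import all_boot all_order all_algebra.
From mathcomp Require Import ring zify.
Import Order.TTheory GRing.Theory Num.Theory.
Local Open Scope ring_scope.

Set Implicit Arguments.
Unset Strict Implicit.
Unset Printing Implicit Defensive.

(* Write L_m(n, z) for the left-hand side and S_m(n, z) for the nested sum on
   the right.  Peeling off the outermost index k_1 gives
   S_{m+1}(n, z) = S_{m+1}(n-1, z) + f(n, z) S_m(n, z/q) with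
   f(k, z) = q^k / ((1 - z q^(k-1)) (1 - q^k)), and a termwise computation with
   the q-Pascal rule shows that L satisfies the same recurrence.  For m >= 1
   both vanish at n = 0, and L_0(n, z) = -1 = -S_0(n, z) is the
   q-Chu-Vandermonde identity for a = 1/z, b = z, whose right-hand side
   (1;q)_n vanishes. *)

Section QPochhammer.
Variables (F : fieldType) (q : F).

Lemma qpoch0 x : qpoch x q 0 = 1.
Proof. by rewrite /qpoch big_ord0. Qed.

Lemma qpochS x j : qpoch x q j.+1 = qpoch x q j * (1 - x * q ^+ j).
Proof. by rewrite /qpoch big_ord_recr. Qed.

Lemma qpochqS j : qpoch q q j.+1 = qpoch q q j * (1 - q ^+ j.+1).
Proof. by rewrite qpochS exprS. Qed.

Lemma qpochS_neq0 x j :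
  qpoch x q j.+1 != 0 -> qpoch x q j != 0 /\ 1 - x * q ^+ j != 0.
Proof. by rewrite qpochS mulf_eq0 negb_or => /andP. Qed.

Lemma qpoch_leq_neq0 x i j : (i <= j)%N -> qpoch x q j != 0 -> qpoch x q i != 0.
Proof.
move=> /subnK <-; elim: (j - i)%N => // d IHd.
by rewrite addSn => /qpochS_neq0[/IHd].
Qed.

Hypothesis q_neq0 : q != 0.

Lemma qpochSl x j : qpoch (x / q) q j.+1 = (1 - x / q) * qpoch x q j.
Proof.
rewrite /qpoch big_ord_recl expr0 mulr1; congr (_ * _).
by apply: eq_bigr => i _; rewrite lift0 exprS; congr (1 - _); field.
Qed.

End QPochhammer.

Section QBinomial.
Variables (F : fieldType) (q : F) (N : nat).
Hypothesis qN_neq1 : forall j, (1 <= j <= N)%N -> 1 - q ^+ j != 0.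

Lemma qpochq_neq0 j : (j <= N)%N -> qpoch q q j != 0.
Proof.
elim: j => [|j IHj] hj; first by rewrite qpoch0 oner_neq0.
by rewrite qpochqS mulf_neq0 ?IHj ?qN_neq1 ?(ltnW hj).
Qed.

Lemma qbinom_small n k : (n < k)%N -> qbinom q n k = 0.
Proof. by rewrite /qbinom ltnNge => /negbTE ->. Qed.

Lemma qbinom0 n : (n <= N)%N -> qbinom q n 0 = 1.
Proof. by move=> hn; rewrite /qbinom qpoch0 subn0 mul1r divff ?qpochq_neq0. Qed.

Lemma qbinom_down n k : (k <= n)%N -> (n < N)%N ->
  qbinom q n k = qbinom q n.+1 k * (1 - q ^+ (n.+1 - k)) / (1 - q ^+ n.+1).
Proof.
move=> hk hn; rewrite /qbinom hk (leqW hk) subSn // !qpochqS.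
have hnN := ltnW hn.
have := qpochq_neq0 hnN; have := qpochq_neq0 (leq_trans hk hnN).
have := qpochq_neq0 (leq_trans (leq_subr k n) hnN).
have : 1 - q ^+ n.+1 != 0 by rewrite qN_neq1 ?hn.
have : 1 - q ^+ (n - k).+1 != 0 by rewrite qN_neq1 //=; lia.
by move=> *; field; do ?[apply/andP; split].
Qed.

Lemma qbinomS n k : (k <= n)%N -> (n < N)%N ->
  qbinom q n.+1 k.+1 = qbinom q n k.+1 + q ^+ (n - k) * qbinom q n k.
Proof.
move=> hk hn; have hnN := ltnW hn.
case: (ltngtP k n) hk => // [lkn|ekn] _; last first.
  rewrite -ekn in hn hnN *.
  rewrite (@qbinom_small k k.+1) // add0r /qbinom !leqnn !subnn !qpoch0 !mulr1.
  by rewrite mul1r !divff ?qpochq_neq0.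
rewrite /qbinom ltnS lkn (ltnW lkn) subSS -(subnSK lkn) !qpochqS.
have -> : n.+1 = ((n - k.+1).+1 + k.+1)%N by lia.
have := qpochq_neq0 hnN; have := qpochq_neq0 (leq_trans (ltnW lkn) hnN).
have := qpochq_neq0 (leq_trans (leq_subr k.+1 n) hnN).
have : 1 - q ^+ (n - k.+1).+1 != 0 by rewrite qN_neq1 //; lia.
have : 1 - q ^+ k.+1 != 0 by rewrite qN_neq1 //; lia.
by move=> *; rewrite exprD; field; do ?[apply/andP; split].
Qed.

Lemma qChu_Vandermonde a b n : (n <= N)%N ->
  \sum_(0 <= k < n.+1) qbinom q n k * qpoch a q k * qpoch b q (n - k) * b ^+ k
  = qpoch (a * b) q n.
Proof.
elim: n => [|n IHn] hn; first by rewrite big_nat1 qbinom0 // !qpoch0 !mulr1.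
have hnN := ltnW hn.
pose U k := qbinom q n k * qpoch a q k * qpoch b q (n.+1 - k) * b ^+ k.
pose V k := q ^+ (n - k) * qbinom q n k * qpoch a q k.+1 * qpoch b q (n - k) * b ^+ k.+1.
have U_last : U n.+1 = 0 by rewrite /U qbinom_small // !mul0r.
have sumU : \sum_(0 <= k < n.+1) U k = U 0%N + \sum_(0 <= k < n.+1) U k.+1.
  by rewrite -(big_nat_recl _ _ U) // [RHS]big_nat_recr // U_last /= addr0.
have split_pascal : \sum_(0 <= k < n.+2)
      qbinom q n.+1 k * qpoch a q k * qpoch b q (n.+1 - k) * b ^+ k
    = \sum_(0 <= k < n.+1) U k + \sum_(0 <= k < n.+1) V k.
  rewrite big_nat_recl // sumU -addrA -big_split /=; congr (_ + _).
    by rewrite /U !qbinom0 // qpoch0 subn0 !mulr1 !mul1r.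
  by apply: eq_big_nat => k /andP[_ hk]; rewrite qbinomS // /U /V subSS; ring.
rewrite split_pascal -big_split qpochS -IHn // mulr_suml.
apply: eq_big_nat => k /andP[_ hk]; rewrite /U /V subSn // !qpochS.
have -> : q ^+ n = q ^+ (n - k) * q ^+ k by rewrite -exprD subnK.
by rewrite /= exprS; ring.
Qed.

End QBinomial.

Section Recurrence.
Variables (F : fieldType) (q : F).
Hypothesis q_neq0 : q != 0.

Definition lhs_term m n z k :=
  qbinom q n k * qpoch (q ^+ m / z) q k * qpoch z q (n - k)
    / (qpoch (z / q ^+ m) q (m + n) * (1 - q ^+ k) ^+ m) * z ^+ k.

Definition lhs_sum m n z := \sum_(1 <= k < n.+1) lhs_term m n z k.

Definition chain_factor (i x : nat) z :=
  q ^+ x / ((1 - z * q ^+ x / q ^+ i.+1) * (1 - q ^+ x)).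

Fixpoint nested_sum m n z :=
  if m is m'.+1 then \sum_(1 <= k < n.+1) chain_factor 0 k z * nested_sum m' k (z / q)
  else 1.

Lemma chain_factorS i x z : chain_factor i.+1 x z = chain_factor i x (z / q).
Proof.
rewrite /chain_factor (exprS q i.+1); congr (_ / ((1 - _) * _)).
by field; rewrite expf_neq0.
Qed.

Lemma qpoch_shift_neq0 m n z :
  qpoch (z / q ^+ m.+1) q (m.+1 + n) != 0 -> qpoch (z / q / q ^+ m) q (m + n) != 0.
Proof.
have -> : z / q / q ^+ m = z / q ^+ m.+1 by rewrite exprS; field; rewrite expf_neq0.
by apply: qpoch_leq_neq0; rewrite addSn.
Qed.

Variable N : nat.
Hypothesis qN_neq1 : forall j, (1 <= j <= N)%N -> 1 - q ^+ j != 0.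

Lemma lhs_sum0 n z : z != 0 -> (n < N)%N -> qpoch z q n.+1 != 0 ->
  lhs_sum 0 n.+1 z = -1.
Proof.
move=> hz hn hD.
have := qChu_Vandermonde qN_neq1 z^-1 z hn.
rewrite mulVf // big_nat_recl // (qbinom0 qN_neq1) // subn0 !qpoch0 !mulr1 mul1r.
have -> : qpoch 1 q n.+1 = 0 by rewrite /qpoch big_ord_recl expr0 mulr1 subrr mul0r.
move=> /eqP; rewrite addrC addr_eq0 => /eqP chu.
rewrite /lhs_sum big_add1 /= -[in RHS](divff hD) -mulNr -chu mulr_suml.
apply: eq_big_nat => k _.
by rewrite /lhs_term !expr0 divr1 add0n div1r mulr1 mulrAC.
Qed.

Lemma lhs_term_rec m n z k : z != 0 -> (n < N)%N ->
  qpoch (z / q ^+ m.+1) q (m.+1 + n.+1) != 0 -> (1 <= k <= n.+1)%N ->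
  lhs_term m.+1 n.+1 z k
  = lhs_term m.+1 n z k + chain_factor 0 n.+1 z * lhs_term m n.+1 (z / q) k.
Proof.
move=> hz hn hD /andP[k1 kn]; rewrite /lhs_term /chain_factor.
have hqm : q ^+ m != 0 by apply: expf_neq0.
have -> : q ^+ m / (z / q) = q ^+ m.+1 / z by rewrite exprS; field; rewrite hz.
have -> : z / q / q ^+ m = z / q ^+ m.+1 by rewrite exprS; field; rewrite hqm.
rewrite (addnS m.+1 n) (addnS m n) -(addSn m n) (qpochS _ _ (m.+1 + n)).
rewrite addnS in hD; have [hD0 hw] := qpochS_neq0 hD.
set w := z / q ^+ m.+1 in hD0 hw *.
have ew : w * q ^+ (m.+1 + n) = z * q ^+ n by rewrite /w exprD; field; rewrite expf_neq0.
rewrite ew in hw *.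
move: (qpoch w q (m.+1 + n)) hD0 => D hD0 {hD ew}.
have hk : 1 - q ^+ k != 0 by apply: qN_neq1; rewrite k1 /= (leq_trans kn hn).
have hn1 : 1 - q ^+ n.+1 != 0 by apply: qN_neq1.
rewrite expr_div_n exprS.
have -> : z * q ^+ n.+1 / q ^+ 1 = z * q ^+ n by rewrite exprS expr1; field.
case: (ltngtP k n.+1) kn => // [lkn|ekn] _.
  rewrite (qbinom_down (n := n) (k := k) qN_neq1 lkn hn) subSn // qpochSl // qpochS.
  rewrite (exprSr (1 - q ^+ k) m) (exprS q (n - k)) (exprS q n).
  rewrite exprS in hn1.
  have en : q ^+ n = q ^+ (n - k) * q ^+ k by rewrite -exprD subnK.
  rewrite en in hw hn1 *.
  have hP : (1 - q ^+ k) ^+ m != 0 by apply: expf_neq0.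
  have hb : q ^+ k != 0 by apply: expf_neq0.
  by field; do ?[apply/andP; split].
rewrite ekn (@qbinom_small _ _ n n.+1) // subnn !qpoch0 !mul0r add0r.
rewrite (exprSr (1 - q ^+ n.+1) m).
have hP : (1 - q ^+ n.+1) ^+ m != 0 by apply: expf_neq0.
have hqn : q ^+ n.+1 != 0 by apply: expf_neq0.
by field; do ?[apply/andP; split].
Qed.

Lemma lhs_sum_rec m n z : z != 0 -> (n < N)%N ->
  qpoch (z / q ^+ m.+1) q (m.+1 + n.+1) != 0 ->
  lhs_sum m.+1 n.+1 z = lhs_sum m.+1 n z + chain_factor 0 n.+1 z * lhs_sum m n.+1 (z / q).
Proof.
move=> hz hn hD.
have -> : lhs_sum m.+1 n z = \sum_(1 <= k < n.+2) lhs_term m.+1 n z k.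
  by rewrite big_nat_recr //= /lhs_term (@qbinom_small _ _ n n.+1) // !mul0r addr0.
rewrite /lhs_sum mulr_sumr -big_split; apply: eq_big_nat => k hk.
exact: lhs_term_rec.
Qed.

Lemma lhs_sum_nested m n z : z != 0 -> (n < N)%N ->
  qpoch (z / q ^+ m) q (m + n.+1) != 0 -> lhs_sum m n.+1 z = - nested_sum m n.+1 z.
Proof.
elim: m n z => [|m IHm] n z hz hn hD.
  by rewrite lhs_sum0 // -(divr1 z) -(expr0 q).
suff lhs_le : forall n', (n' <= n.+1)%N -> lhs_sum m.+1 n' z = - nested_sum m.+1 n' z.
  exact: lhs_le.
elim=> [|n' IHn'] hn'; first by rewrite /lhs_sum /= !big_geq // oppr0.
have hD' : qpoch (z / q ^+ m.+1) q (m.+1 + n'.+1) != 0.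
  by apply: qpoch_leq_neq0 hD; rewrite leq_add2l.
rewrite lhs_sum_rec ?(leq_ltn_trans _ hn) // IHn' ?(ltnW hn') //.
rewrite IHm ?mulf_neq0 ?invr_neq0 ?(leq_ltn_trans _ hn) ?qpoch_shift_neq0 //.
by rewrite /= [in RHS]big_nat_recr //= mulrN -opprD.
Qed.

End Recurrence.

Section Chains.
Variables (T : Type) (m : nat).

Definition ffcons (p : T * {ffun 'I_m -> T}) : {ffun 'I_m.+1 -> T} :=
  [ffun i => if unlift ord0 i is Some j then p.2 j else p.1].

Lemma ffcons0 p : ffcons p ord0 = p.1.
Proof. by rewrite ffunE unlift_none. Qed.

Lemma ffconsS p j : ffcons p (lift ord0 j) = p.2 j.
Proof. by rewrite ffunE liftK. Qed.

Lemma ffcons_bij : bijective ffcons.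
Proof.
exists (fun k : {ffun 'I_m.+1 -> T} =>
  (k ord0, [ffun j => k (lift ord0 j)] : {ffun 'I_m -> T})).
  by case=> x k; rewrite ffcons0; congr pair; apply/ffunP => j; rewrite ffunE ffconsS.
by move=> k; apply/ffunP => i; rewrite ffunE; case: unliftP => [j ->|->]; rewrite ?ffunE.
Qed.

End Chains.

Lemma forall_ordS m (P : pred 'I_m.+1) :
  [forall i, P i] = P ord0 && [forall i : 'I_m, P (lift ord0 i)].
Proof.
apply/forallP/andP => [H | [H0 /forallP HS] i]; first by split => //; apply/forallP.
by case: (unliftP ord0 i) => [j ->|->].
Qed.

Definition decr_chain M m n (k : {ffun 'I_m -> 'I_M}) :=
  [forall i, (0 < k i <= n)%N && [forall j : 'I_m, (i <= j)%N ==> (k j <= k i)%N]].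

Lemma decr_chain_cons M m n x (k : {ffun 'I_m -> 'I_M}) :
  decr_chain n (ffcons (x, k)) = (0 < x <= n)%N && decr_chain x k.
Proof.
rewrite /decr_chain forall_ordS ffcons0 forall_ordS leqnn /=.
have tail (i : 'I_m) :
    (0 < ffcons (x, k) (lift ord0 i) <= n)%N &&
    [forall j : 'I_m.+1,
       (lift ord0 i <= j)%N ==> (ffcons (x, k) j <= ffcons (x, k) (lift ord0 i))%N]
  = (0 < k i <= n)%N && [forall j : 'I_m, (i <= j)%N ==> (k j <= k i)%N].
  rewrite forall_ordS !ffconsS /=; congr (_ && _); apply: eq_forallb => j.
  by rewrite ffconsS /bump !add1n ltnS.
rewrite (eq_forallb tail) ffcons0 leqnn /= -andbA.
under eq_forallb => i do rewrite ffconsS.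
case: (boolP (0 < x <= n)%N) => //= /andP[_ xn].
apply/andP/forallP => [[/forallP kx /forallP H] i | H].
  by have /andP[/andP[-> _] ->] := H i; rewrite kx.
split; apply/forallP => i; have /andP[/andP[ki kix] cmp] := H i.
  exact: kix.
by rewrite ki cmp (leq_trans kix xn).
Qed.

Section ChainSum.
Variables (F : fieldType) (q : F).
Hypothesis q_neq0 : q != 0.

(* The chains take values in a fixed 'I_M.+1 with M >= n, so that the inner sums
   of the recursion are taken over the same type. *)
Definition chain_sum M m n z :=
  \sum_(k : {ffun 'I_m -> 'I_M.+1} | decr_chain n k)
    \prod_(i < m) chain_factor q i (k i) z.

Lemma chain_sum_nested M m n z : (n <= M)%N -> chain_sum M m n z = nested_sum q m n z.
Proof.
elim: m n z => [|m IHm] n z hn.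
  rewrite /chain_sum (eq_bigl xpredT) => [|k]; last by apply/forallP => -[].
  by under eq_bigr do rewrite big_ord0; rewrite sumr_const card_ffun !card_ord.
rewrite /chain_sum (reindex (@ffcons _ m)) /=; last exact: onW_bij (ffcons_bij _ m).
pose Pair := ('I_M.+1 * {ffun 'I_m -> 'I_M.+1})%type.
rewrite (eq_bigl (fun p : Pair => (0 < p.1 <= n)%N && decr_chain p.1 p.2)); last first.
  by case=> x k; rewrite decr_chain_cons.
rewrite (eq_bigr (fun p : Pair =>
    chain_factor q 0 p.1 z * \prod_(i < m) chain_factor q i (p.2 i) (z / q))); last first.
  case=> x k _; rewrite big_ord_recl ffcons0; congr (_ * _).
  by apply: eq_bigr => i _; rewrite ffconsS lift0 chain_factorS.
rewrite -(pair_big_dep (fun x : 'I_M.+1 => (0 < x <= n)%N) (fun x k => decr_chain x k)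
   (fun x k => chain_factor q 0 x z * \prod_(i < m) chain_factor q i (k i) (z / q))) /=.
pose G x := chain_factor q 0 x z * nested_sum q m x (z / q).
transitivity (\sum_(x : 'I_M.+1 | (0 < x <= n)%N) G x).
  apply: eq_bigr => x /andP[_ hx].
  by rewrite /G -mulr_sumr -IHm ?(leq_trans hx hn).
rewrite -(big_mkord (fun x => 0 < x <= n)%N G).
rewrite (big_nat_widen 1 n.+1 M.+1) ?ltnS // big_ltn_cond //=.
rewrite big_nat_cond [RHS]big_nat_cond; apply: eq_bigl => i.
by case: i => //= i; rewrite ltnS.
Qed.

End ChainSum.

Theorem theorem1p2 (F : fieldType) (m n : nat) (q z : F) :
  (0 < m)%N -> (0 < n)%N ->
  q != 0 -> z != 0 ->
  (forall k : nat, (1 <= k <= n)%N -> 1 - q ^+ k != 0) ->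
  qpoch (z / q ^+ m) q (m + n) != 0 ->
  \sum_(1 <= k < n.+1)
     qbinom q n k * qpoch (q ^+ m / z) q k * qpoch z q (n - k)
       / (qpoch (z / q ^+ m) q (m + n) * (1 - q ^+ k) ^+ m) * z ^+ k
  = - \sum_(k : {ffun 'I_m -> 'I_n.+1} |
              [forall i, 0 < (k i : nat)]%N &&
              [forall i : 'I_m, forall j : 'I_m, (i <= j)%N ==> (k j <= k i)%N])
        \prod_(i < m)
           (q ^+ (k i) / ((1 - z * q ^+ (k i) / q ^+ i.+1) * (1 - q ^+ (k i)))).
Proof.
move=> _ n_gt0 q_neq0 z_neq0 qn_neq1 hD.
have chainE (k : {ffun 'I_m -> 'I_n.+1}) :
    [forall i, 0 < (k i : nat)]%N &&
    [forall i : 'I_m, forall j : 'I_m, (i <= j)%N ==> (k j <= k i)%N] = decr_chain n k.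
  apply/andP/forallP => [[/forallP pos /forallP decr] i | H].
    by rewrite pos -ltnS ltn_ord; apply: decr.
  by split; apply/forallP => i; case/andP: (H i) => /andP[].
rewrite (eq_bigl _ _ chainE) {chainE}.
change (lhs_sum q m n z = - chain_sum q n m n z).
rewrite chain_sum_nested //.
case: n n_gt0 qn_neq1 hD => // n _ qn_neq1 hD.
exact: (lhs_sum_nested q_neq0 qn_neq1).
Qed.
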